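(* Let $1<p<N$, $q>0$, $\mu>0$, $g(s)=\frac{(p-1)^{q-p+1}}{\mu^q}(1+\mu s)^{p-1}|\ln(1+\mu s)|^{q-1}\ln(1+\mu s)$ for $s>-1/\mu$, and $G(s)=\int_0^sg(t)\,dt$. Then $H(s):=g(s)s-pG(s)\to+\infty$ as $s\to+\infty$. *)

From Stdlib Require Import Reals.
From Coquelicot Require Import Coquelicot.
Open Scope R_scope.

(* |x|^(q-1) * x, with the value 0 at x = 0 (its continuous extension for q > 0). *)
Definition spow (q x : R) : R :=
  if Req_EM_T x 0 then 0 else Rpower (Rabs x) (q - 1) * x.

Definition gfun (p q mu : R) (s : R) : R :=
  Rpower (p - 1) (q - p + 1) / Rpower mu q
  * Rpower (1 + mu * s) (p - 1) * spow q (ln (1 + mu * s)).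

Definition Gfun (p q mu : R) (s : R) : R := RInt (gfun p q mu) 0 s.

Definition Hfun (p q mu : R) (s : R) : R := gfun p q mu s * s - p * Gfun p q mu s.

From Stdlib Require Import Reals Lra Psatz.
From Coquelicot Require Import Coquelicot.
Open Scope R_scope.

(* With t = 1 + mu s and L = ln t, for s > 0 one has g = C t^(p-1) L^q and
   H' = g' s - (p-1) g = C t^(p-2) L^(q-1) (q (t-1) - (p-1) L).
   Since ln t = o(t), the bracket is eventually at least q t / 2, and since
   ln L = o(L), t^(p-1) L^(q-1) = exp((p-1) L + (q-1) ln L) is eventually at
   least 1.  Hence H' is eventually bounded below by C q / 2 > 0, and H grows
   at least linearly. *)

Lemma is_lim_affine_p_infty (a c : R) :
  0 < c -> is_lim (fun x => a + c * x) p_infty p_infty.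
Proof.
  intros hc P [M HM]. exists ((M - a) / c). intros x hx. apply HM.
  apply (Rmult_lt_compat_l c) in hx; [|exact hc].
  replace (c * ((M - a) / c)) with (M - a) in hx by (field; lra). lra.
Qed.

Lemma is_lim_p_infty_of_derive_ge (f df : R -> R) (c : R) :
  0 < c -> Rbar_locally p_infty (fun x => is_derive f x (df x) /\ c <= df x) ->
  is_lim f p_infty p_infty.
Proof.
  intros hc [M HM]. set (a := M + 1).
  apply (is_lim_le_p_loc (fun x => (f a - c * a) + c * x));
    [|exact (is_lim_affine_p_infty _ _ hc)].
  exists a. intros x hx.
  destruct (MVT_gen f a x df) as [xi [hxi hmvt]];
    rewrite ?Rmin_left, ?Rmax_right in * by lra.
  - intros y hy. apply HM. unfold a in *. lra.
  - intros y hy. apply continuity_pt_filterlim, (ex_derive_continuous (V := R_NormedModule)).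
    exists (df y). apply HM. unfold a in *. lra.
  - assert (hd : c <= df xi) by (apply HM; unfold a in *; lra).
    assert (c * (x - a) <= df xi * (x - a)) by (apply Rmult_le_compat_r; lra).
    lra.
Qed.

Lemma eventually_mul_ln_le (a c : R) :
  0 < c -> Rbar_locally p_infty (fun t => a * ln t <= c * t).
Proof.
  intros hc. set (eps := c / (Rabs a + 1)).
  assert (heps : 0 < eps) by (apply Rdiv_lt_0_compat; [|pose proof (Rabs_pos a)]; lra).
  assert (hlim : Rbar_locally p_infty (fun t => Rabs (ln t / t - 0) < eps))
    by exact (is_lim_div_ln_p _ (locally_ball 0 (mkposreal _ heps))).
  apply (filter_imp (fun t => 1 < t /\ Rabs (ln t / t - 0) < eps));
    [|apply filter_and; [exists 1; tauto | exact hlim]].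
  intros t [ht hln]. rewrite Rminus_0_r in hln.
  apply Rabs_lt_between in hln as [_ hln].
  assert (hL : 0 < ln t) by (rewrite <- ln_1; apply ln_increasing; lra).
  assert (hlt : ln t < eps * t).
  { replace (ln t) with (ln t / t * t) by (field; lra). nra. }
  assert (hc' : (Rabs a + 1) * eps = c) by (unfold eps; field; pose proof (Rabs_pos a); lra).
  assert (a * ln t <= Rabs a * ln t) by (apply Rmult_le_compat_r; [lra | apply RRle_abs]).
  pose proof (Rabs_pos a). nra.
Qed.

Lemma spow_pos (q x : R) : 0 < x -> spow q x = Rpower x q.
Proof.
  intros hx. unfold spow. destruct (Req_EM_T x 0); [lra|].
  rewrite Rabs_pos_eq by lra. rewrite <- (Rpower_1 x) at 2 by exact hx.
  rewrite <- Rpower_plus. f_equal. ring.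
Qed.

Lemma Rabs_spow (q x : R) : x <> 0 -> Rabs (spow q x) = Rpower (Rabs x) q.
Proof.
  intros hx. unfold spow. destruct (Req_EM_T x 0); [contradiction|].
  assert (hax : 0 < Rabs x) by (apply Rabs_pos_lt; exact hx).
  rewrite Rabs_mult, (Rabs_pos_eq (Rpower _ _)) by (left; apply exp_pos).
  rewrite <- (Rpower_1 (Rabs x)) at 2 by exact hax.
  rewrite <- Rpower_plus. f_equal. ring.
Qed.

Lemma continuous_spow_0 (q : R) : 0 < q -> continuous (spow q) 0.
Proof.
  intros hq. apply filterlim_locally. intros eps.
  assert (hd : 0 < Rpower eps (/ q)) by apply exp_pos.
  exists (mkposreal _ hd). intros x hx.
  change (Rabs (x - 0) < Rpower eps (/ q)) in hx.
  change (Rabs (spow q x - spow q 0) < eps).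
  rewrite Rminus_0_r in hx.
  replace (spow q 0) with 0 by (unfold spow; destruct (Req_EM_T 0 0); lra).
  rewrite Rminus_0_r.
  destruct (Req_EM_T x 0) as [->|hx0].
  - unfold spow. destruct (Req_EM_T 0 0); [|lra]. rewrite Rabs_R0. apply cond_pos.
  - rewrite Rabs_spow by exact hx0.
    apply Rlt_le_trans with (Rpower (Rpower eps (/ q)) q).
    + apply Rlt_Rpower_l; [exact hq | split; [apply Rabs_pos_lt|]; assumption].
    + rewrite Rpower_mult, Rinv_l, Rpower_1 by (try apply cond_pos; lra). lra.
Qed.

Definition gcoef (p q mu : R) : R := Rpower (p - 1) (q - p + 1) / Rpower mu q.

Lemma gcoef_pos (p q mu : R) : 0 < gcoef p q mu.
Proof. apply Rdiv_lt_0_compat; apply exp_pos. Qed.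

Definition dHfun (p q mu s : R) : R :=
  gfun p q mu s * (q * (mu * s) - (p - 1) * ln (1 + mu * s))
  / ((1 + mu * s) * ln (1 + mu * s)).

Section Hfun_derivative.

Variables p q mu : R.
Hypothesis hq : 0 < q.
Hypothesis hmu : 0 < mu.

Lemma ln_1_plus_pos (s : R) : 0 < s -> 0 < ln (1 + mu * s).
Proof. intros hs. rewrite <- ln_1. apply ln_increasing; nra. Qed.

Lemma gfun_exp (s : R) : 0 < s ->
  gfun p q mu s
  = gcoef p q mu * exp ((p - 1) * ln (1 + mu * s) + q * ln (ln (1 + mu * s))).
Proof.
  intros hs. unfold gfun. rewrite spow_pos by exact (ln_1_plus_pos s hs).
  rewrite exp_plus. unfold gcoef, Rpower. ring.
Qed.

Lemma is_derive_gfun (s : R) : 0 < s ->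
  is_derive (gfun p q mu) s
    (gfun p q mu s * (mu * ((p - 1) * ln (1 + mu * s) + q)
                      / ((1 + mu * s) * ln (1 + mu * s)))).
Proof.
  intros hs. pose proof (ln_1_plus_pos s hs) as hL.
  apply (is_derive_ext_loc (fun y => gcoef p q mu
           * exp ((p - 1) * ln (1 + mu * y) + q * ln (ln (1 + mu * y))))).
  { apply (locally_interval _ s 0 p_infty); [exact hs | exact I|].
    intros y hy _. symmetry. exact (gfun_exp y hy). }
  rewrite (gfun_exp s hs). auto_derive.
  - repeat split; nra.
  - field. split; nra.
Qed.

Lemma continuous_gfun (s : R) : 0 <= s -> continuous (gfun p q mu) s.
Proof.
  intros [hs | <-].
  { apply (ex_derive_continuous (V := R_NormedModule)).
    eexists. exact (is_derive_gfun s hs). }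
  apply (continuous_mult (fun s => gcoef p q mu * Rpower (1 + mu * s) (p - 1))
                          (fun s => spow q (ln (1 + mu * s)))).
  - apply (ex_derive_continuous (V := R_NormedModule)).
    unfold Rpower. auto_derive. lra.
  - apply (continuous_comp (fun s => ln (1 + mu * s)) (spow q)).
    + apply (ex_derive_continuous (V := R_NormedModule)). auto_derive. lra.
    + rewrite Rmult_0_r, Rplus_0_r, ln_1. exact (continuous_spow_0 q hq).
Qed.

Lemma is_derive_Gfun (s : R) : 0 < s -> is_derive (Gfun p q mu) s (gfun p q mu s).
Proof.
  intros hs. apply is_derive_RInt with (a := 0).
  - apply (locally_interval _ s 0 p_infty); [exact hs | exact I|].
    intros b hb _. simpl in hb. apply (RInt_correct (V := R_CompleteNormedModule)).
    apply (ex_RInt_continuous (V := R_CompleteNormedModule)).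
    intros z hz. rewrite Rmin_left in hz by lra. apply continuous_gfun. lra.
  - apply continuous_gfun. lra.
Qed.

Lemma is_derive_Hfun (s : R) : 0 < s ->
  is_derive (Hfun p q mu) s (dHfun p q mu s).
Proof.
  intros hs. pose proof (ln_1_plus_pos s hs) as hL.
  pose proof (is_derive_gfun s hs) as hg. pose proof (is_derive_Gfun s hs) as hG.
  unfold Hfun. auto_derive.
  - split; [eexists; exact hg | split; [eexists; exact hG | exact I]].
  - change (Derive (fun x => gfun p q mu x) s) with (Derive (gfun p q mu) s).
    change (Derive (fun x => Gfun p q mu x) s) with (Derive (Gfun p q mu) s).
    rewrite (is_derive_unique _ _ _ hg), (is_derive_unique _ _ _ hG).
    unfold dHfun. field. split; nra.
Qed.

(* The last hypothesis is t^(p-1) L^(q-1) >= 1 after taking logarithms. *)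
Lemma dHfun_ge (s : R) : 4 < 1 + mu * s ->
  (p - 1) * ln (1 + mu * s) <= q / 4 * (1 + mu * s) ->
  0 <= (p - 1) * ln (1 + mu * s) + (q - 1) * ln (ln (1 + mu * s)) ->
  gcoef p q mu * q / 2 <= dHfun p q mu s.
Proof.
  intros ht hlin hexp.
  assert (hs : 0 < s) by nra.
  pose proof (ln_1_plus_pos s hs) as hL. pose proof (gcoef_pos p q mu) as hC.
  set (t := 1 + mu * s) in *. set (L := ln t) in *.
  set (E := exp ((p - 1) * L + (q - 1) * ln L)).
  assert (hE : 1 <= E) by (pose proof (exp_ineq1_le ((p - 1) * L + (q - 1) * ln L)); unfold E; lra).
  assert (hg : gfun p q mu s = gcoef p q mu * E * L).
  { rewrite (gfun_exp s hs). fold t L. unfold E.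
    replace ((p - 1) * L + q * ln L) with ((p - 1) * L + (q - 1) * ln L + ln L) by ring.
    rewrite exp_plus, exp_ln by exact hL. ring. }
  assert (hnum : q * t / 2 <= q * (mu * s) - (p - 1) * L)
    by (replace (mu * s) with (t - 1) by (unfold t; ring); nra).
  unfold dHfun. fold t L. rewrite hg.
  replace (gcoef p q mu * E * L * (q * (mu * s) - (p - 1) * L) / (t * L))
    with (gcoef p q mu * E * (q * (mu * s) - (p - 1) * L) / t) by (field; lra).
  apply (Rmult_le_reg_r t); [lra|].
  replace (gcoef p q mu * E * (q * (mu * s) - (p - 1) * L) / t * t)
    with (gcoef p q mu * E * (q * (mu * s) - (p - 1) * L)) by (field; lra).
  assert (gcoef p q mu * 1 * (q * t / 2) <= gcoef p q mu * E * (q * (mu * s) - (p - 1) * L)).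
  { apply Rmult_le_compat; [nra | nra | apply Rmult_le_compat_l; lra | exact hnum]. }
  nra.
Qed.

Lemma eventually_dHfun_ge : 1 < p ->
  Rbar_locally p_infty (fun s =>
    is_derive (Hfun p q mu) s (dHfun p q mu s) /\ gcoef p q mu * q / 2 <= dHfun p q mu s).
Proof.
  intros hp.
  pose proof (is_lim_affine_p_infty 1 mu hmu) as ht.
  assert (h4 : Rbar_locally p_infty (fun s => 4 < 1 + mu * s))
    by (apply ht; exists 4; tauto).
  assert (hlin : Rbar_locally p_infty
            (fun s => (p - 1) * ln (1 + mu * s) <= q / 4 * (1 + mu * s)))
    by (apply (ht (fun t => (p - 1) * ln t <= q / 4 * t)), eventually_mul_ln_le; lra).
  assert (hexp : Rbar_locally p_infty (fun s =>
            (1 - q) * ln (ln (1 + mu * s)) <= (p - 1) * ln (1 + mu * s)))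
    by (apply (ht (fun t => (1 - q) * ln (ln t) <= (p - 1) * ln t)),
          (is_lim_ln_p (fun L => (1 - q) * ln L <= (p - 1) * L)), eventually_mul_ln_le; lra).
  apply (filter_imp (fun s => 4 < 1 + mu * s /\
           (p - 1) * ln (1 + mu * s) <= q / 4 * (1 + mu * s) /\
           (1 - q) * ln (ln (1 + mu * s)) <= (p - 1) * ln (1 + mu * s)));
    [|apply filter_and; [exact h4 | apply filter_and; assumption]].
  intros s (h4s & hlins & hexps). split.
  - apply is_derive_Hfun. nra.
  - apply dHfun_ge; [exact h4s | exact hlins | lra].
Qed.

End Hfun_derivative.

Theorem lemma3p1 (N p q mu : R) (hp1 : 1 < p) (hpN : p < N) (hq : 0 < q) (hmu : 0 < mu) :
  is_lim (Hfun p q mu) p_infty p_infty.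
Proof.
  apply (is_lim_p_infty_of_derive_ge _ (dHfun p q mu) (gcoef p q mu * q / 2)).
  - pose proof (gcoef_pos p q mu). nra.
  - exact (eventually_dHfun_ge p q mu hq hmu hp1).
Qed.
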